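(* Let $A$ be a set. The assignment on objects $(X,S)\mapsto (A\times X,S)$ and on morphisms $\mathcal{H}\mapsto (A\rightarrow\mathcal{H})$ defines a functor $A\rightarrow\_ : \mathsf{Open}\rightarrow\mathsf{Open}$.
   Context: An open game $\mathcal{G}:(X,S)\rightarrow(Y,R)$ (for sets $X,Y,R,S$) consists of a set $\Sigma_\mathcal{G}$ of strategy profiles, a play function $P_\mathcal{G}:\Sigma_\mathcal{G}\rightarrow(X\rightarrow Y)$, a coutility function $C_\mathcal{G}:\Sigma_\mathcal{G}\rightarrow(X\times R\rightarrow S)$, and an equilibrium function $E_\mathcal{G}:X\times(Y\rightarrow R)\rightarrow\mathcal{P}\Sigma_\mathcal{G}$ (written $E_\mathcal{G}\,x\,k$). The category $\mathsf{Open}$ has as objects pairs of sets $(X,S)$ and as morphisms $(X,S)\rightarrow(Y,R)$ open games, considered up to isomorphism of strategy sets (a bijection of strategy sets compatible with play, coutility and equilibrium functions). The identity on $(X,S)$ has strategy set $\mathbf{1}$, play function the identity on $X$, coutility $(x,s)\mapsto s$, and equilibrium function returning all strategies. The composite of $\mathcal{G}:(X,S)\rightarrow(Y,R)$ and $\mathcal{H}:(Y,R)\rightarrow(Z,Q)$ is $\mathcal{H}\circ\mathcal{G}:(X,S)\rightarrow(Z,Q)$ with strategies $\Sigma_\mathcal{G}\times\Sigma_\mathcal{H}$, play $P\,(\sigma_1,\sigma_2)\,x=P_\mathcal{H}\,\sigma_2\,(P_\mathcal{G}\,\sigma_1\,x)$, coutility $C\,(\sigma_1,\sigma_2)\,(x,q)=C_\mathcal{G}\,\sigma_1\,(x,\,C_\mathcal{H}\,\sigma_2\,(P_\mathcal{G}\,\sigma_1\,x,\,q))$,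 and $(\sigma_1,\sigma_2)\in E_{\mathcal{H}\circ\mathcal{G}}\,x\,k$ iff $\sigma_1\in E_\mathcal{G}\,x\,k'$ where $k'\,y=C_\mathcal{H}\,\sigma_2\,(y,\,k(P_\mathcal{H}\,\sigma_2\,y))$, and $\sigma_2\in E_\mathcal{H}\,(P_\mathcal{G}\,\sigma'\,x)\,k$ for all $\sigma'\in\Sigma_\mathcal{G}$. For a set $A$ and a game $\mathcal{H}:(X,S)\rightarrow(Y,R)$ with strategies $\Sigma_\mathcal{H}$, the game $A\rightarrow\mathcal{H}:(A\times X,S)\rightarrow(A\times Y,R)$ has strategy set $A\rightarrow\Sigma_\mathcal{H}$ (functions $f:A\rightarrow\Sigma_\mathcal{H}$), play function $P\,f\,(a,x)=(a,\,P_\mathcal{H}\,(fa)\,x)$, coutility $C\,f\,((a,x),r)=C_\mathcal{H}\,(fa)\,(x,r)$, and equilibrium: $f\in E_{A\rightarrow\mathcal{H}}\,(a,x)\,k$ (for $k:A\times Y\rightarrow R$) iff for all $a'\in A$, $fa'\in E_\mathcal{H}\,x\,(k(a',\_))$. *)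

Set Implicit Arguments.

(* An open game G : (X,S) -> (Y,R). The equilibrium function
   E : X -> (Y -> R) -> P(Sigma) is a predicate on strategies. *)
Record OpenGame (X S Y R : Type) := mkGame {
  strat : Type;
  play : strat -> X -> Y;
  coplay : strat -> X * R -> S;
  equil : X -> (Y -> R) -> strat -> Prop
}.
Arguments mkGame {X S Y R}.
Arguments strat {X S Y R}.
Arguments play {X S Y R}.
Arguments coplay {X S Y R}.
Arguments equil {X S Y R}.

Definition game_iso {X S Y R : Type} (G H : OpenGame X S Y R) : Prop :=
  exists (f : strat G -> strat H) (g : strat H -> strat G),
    (forall s, g (f s) = s) /\ (forall t, f (g t) = t) /\
    (forall s x, play G s x = play H (f s) x) /\
    (forall s xr, coplay G s xr = coplay H (f s) xr) /\
    (forall x k s, equil G x k s <-> equil H x k (f s)).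

Definition id_game (X S : Type) : OpenGame X S X S :=
  mkGame unit (fun _ x => x) (fun _ xs => snd xs) (fun _ _ _ => True).

Definition comp_game {X S Y R Z Q : Type}
  (G : OpenGame X S Y R) (H : OpenGame Y R Z Q) : OpenGame X S Z Q :=
  mkGame (strat G * strat H)%type
    (fun s x => play H (snd s) (play G (fst s) x))
    (fun s xq => coplay G (fst s)
                   (fst xq, coplay H (snd s) (play G (fst s) (fst xq), snd xq)))
    (fun x k s =>
       equil G x (fun y => coplay H (snd s) (y, k (play H (snd s) y))) (fst s) /\
       (forall s' : strat G, equil H (play G s' x) k (snd s))).

Definition lift_game (A : Type) {X S Y R : Type} (H : OpenGame X S Y R)
  : OpenGame (A * X) S (A * Y) R :=
  mkGame (A -> strat H)
    (fun f ax => (fst ax, play H (f (fst ax)) (snd ax)))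
    (fun f axr => coplay H (f (fst (fst axr))) (snd (fst axr), snd axr))
    (fun ax k f => forall a' : A, equil H (snd ax) (fun y => k (a', y)) (f a')).

From Stdlib Require Import FunctionalExtensionality.

(* Lifting acts pointwise on strategies, so the required isomorphisms of
   strategy sets are postcomposition with a given bijection, [A -> 1 = 1] and
   [A -> S * T = (A -> S) * (A -> T)]. The equilibrium conditions agree because
   the lifted condition quantifies over every [a'], and in the composite of the
   lifted games the deviation [s' : A -> strat G] only enters through the
   value [s' a], so constant functions reach every deviation [s' : strat G]. *)

Section LiftFunctor.

Variable A : Type.

Lemma lift_game_iso {X S Y R : Type} (G H : OpenGame X S Y R) :
  game_iso G H -> game_iso (lift_game A G) (lift_game A H).
Proof.
  intros [f [g [gf [fg [play_f [coplay_f equil_f]]]]]].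
  exists (fun s a => f (s a)), (fun t a => g (t a)); simpl.
  split; [|split; [|split; [|split]]].
  - intro s; extensionality a; apply gf.
  - intro t; extensionality a; apply fg.
  - intros s [a x]; simpl; rewrite play_f; reflexivity.
  - intros s [[a x] r]; apply coplay_f.
  - intros [a x] k s; split; intros Hs a'; apply equil_f, Hs.
Qed.

Lemma lift_id_game (X S : Type) :
  game_iso (lift_game A (id_game X S)) (id_game (A * X) S).
Proof.
  exists (fun _ => tt), (fun _ _ => tt); simpl.
  split; [|split; [|split; [|split]]].
  - intro s; extensionality a; destruct (s a); reflexivity.
  - intros []; reflexivity.
  - intros s [a x]; reflexivity.
  - intros s [[a x] r]; reflexivity.
  - intros x k s; tauto.
Qed.

Lemma lift_comp_game {X S Y R Z Q : Type}
    (G : OpenGame X S Y R) (H : OpenGame Y R Z Q) :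
  game_iso (lift_game A (comp_game G H))
           (comp_game (lift_game A G) (lift_game A H)).
Proof.
  exists (fun s => (fun a => fst (s a), fun a => snd (s a))),
         (fun p a => (fst p a, snd p a)); simpl.
  split; [|split; [|split; [|split]]].
  - intro s; extensionality a; destruct (s a); reflexivity.
  - intros [sG sH]; reflexivity.
  - intros s [a x]; reflexivity.
  - intros s [[a x] r]; reflexivity.
  - intros [a x] k s; simpl; split.
    + intro Hs; split.
      * intro a'; apply (proj1 (Hs a')).
      * intros s' a'; apply (proj2 (Hs a')).
    + intros [HG HH] a'; split.
      * apply HG.
      * intro s'; apply (HH (fun _ => s') a').
Qed.

End LiftFunctor.

Theorem lemma4 (A : Type) :
  (forall (X S Y R : Type) (G H : OpenGame X S Y R),
      game_iso G H -> game_iso (lift_game A G) (lift_game A H)) /\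
  (forall (X S : Type),
      game_iso (lift_game A (id_game X S)) (id_game (A * X) S)) /\
  (forall (X S Y R Z Q : Type) (G : OpenGame X S Y R) (H : OpenGame Y R Z Q),
      game_iso (lift_game A (comp_game G H))
               (comp_game (lift_game A G) (lift_game A H))).
Proof.
  split; [|split].
  - apply lift_game_iso.
  - apply lift_id_game.
  - apply lift_comp_game.
Qed.
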